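(* Let $I=(T,((U_1,S_1),\dots,(U_k,S_k)))$ be an instance of \textsc{Generalized Graphic Inverse Voronoi in Trees} with $S_i\subseteq W_i$ for all $i$, let $xy\in E_1$ with $x\in W_1$ and $y\in U_1\setminus W_1$, let $\varepsilon>0$, and let $I'$ be the instance obtained from $I$ by expanding the edge $xy$ from $E_1$ by $\varepsilon$. If $\Sigma=\{s_1,\dots,s_k\}$ (with $s_i\in S_i$) is a solution to $I$, then $\Sigma$ is also a solution to $I'$.
   Context: \textsc{Generalized Graphic Inverse Voronoi in Trees}: input is a tree $T$ with positive edge-lengths $\lambda$ and pairs $(U_1,S_1),\dots,(U_k,S_k)$ of subsets of $V(T)$ with $U_1,\dots,U_k$ covering $V(T)$. A solution is $s_1,\dots,s_k\in V(T)$ with $s_i\in S_i$ and $U_i=\mathrm{cell}_T(s_i,\{s_1,\dots,s_k\})$ for all $i$, where $\mathrm{cell}_T(s,\Sigma)=\{x\in V(T)\mid d_T(s,x)\le d_T(s',x)\ \forall s'\in\Sigma\}$ and $d_T$ is the shortest-path distance. For $i\in[k]$, $W_i=U_i\setminus\bigcup_{j\neq i}U_j$ and $E_i=\{uv\in E(T)\mid u\in W_i,\ v\in U_i\setminus W_i\}$. Expansion of $xy\in E_1$ (with $x\in W_1$, $y\in U_1\setminus W_1$) by $\varepsilon$: $T'$ is obtained from $T$ by subdividing $xy$ with a new vertex $y'$, with lengths $\lambda'(xy')=\lambda(xy)$, $\lambda'(yy')=\varepsilon$, and all other edges keeping their lengths; $U_1'$ is the set of vertices of $U_1$ in the component of $T-y$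 containing $x$, together with $y'$; $I'=(T',((U_1',S_1),(U_2,S_2),\dots,(U_k,S_k)))$. *)

From HB Require Import structures.
From mathcomp Require Import all_boot all_order all_algebra.
From mathcomp Require Import reals.
Set Implicit Arguments. Unset Strict Implicit. Unset Printing Implicit Defensive.
Import Order.TTheory GRing.Theory Num.Theory.
Local Open Scope ring_scope.

Section Defs.
Variable R : realType.
Variable V : finType.

Definition is_tree (e : rel V) : Prop :=
  [/\ symmetric e, irreflexive e,
      (forall u v : V, connect e u v) &
      (forall c : seq V, (3 <= size c)%N -> uniq c -> ~~ cycle e c)].

Definition edge_lengths (e : rel V) (lam : V -> V -> R) : Prop :=
  forall u v : V, e u v -> 0 < lam u v /\ lam u v = lam v u.

Fixpoint walk_len (lam : V -> V -> R) (u : V) (p : seq V) : R :=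
  if p is v :: p' then lam u v + walk_len lam v p' else 0.

(* all simple paths u :: p from u to w (their vertices are pairwise distinct,
   so p has fewer than #|V| elements) *)
Definition simple_paths (e : rel V) (u w : V) : seq (seq V) :=
  flatten [seq [seq p <- [seq tval t | t : n.-tuple V] |
                 [&& path e u p, last u p == w & uniq (u :: p)]]
          | n <- iota 0 #|V|].

(* d_T(u,w): the minimum length of a u-w path (0 if there is none, which
   never happens in a connected graph). Positive lengths make shortest walks
   simple paths, so minimizing over simple paths is the shortest-path distance. *)
Definition dist (e : rel V) (lam : V -> V -> R) (u w : V) : R :=
  match [seq walk_len lam u p | p <- simple_paths e u w] with
  | [::] => 0
  | a :: l => foldr Num.min a l
  end.

Definition cell (e : rel V) (lam : V -> V -> R) (s : V) (Sig : {set V}) : {set V} :=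
  [set z | [forall s' in Sig, dist e lam s z <= dist e lam s' z]].

Definition covers (k : nat) (U : 'I_k -> {set V}) : Prop :=
  \bigcup_(i < k) U i = [set: V].

Definition Wset (k : nat) (U : 'I_k -> {set V}) (i : 'I_k) : {set V} :=
  U i :\: \bigcup_(j < k | j != i) U j.

Definition in_E (e : rel V) (k : nat) (U : 'I_k -> {set V}) (i : 'I_k) (u v : V) : bool :=
  [&& e u v, u \in Wset U i & v \in U i :\: Wset U i].

Definition is_solution (e : rel V) (lam : V -> V -> R) (k : nat)
    (U S : 'I_k -> {set V}) (s : 'I_k -> V) : Prop :=
  forall i : 'I_k, s i \in S i /\ U i = cell e lam (s i) [set s j | j : 'I_k].

End Defs.

(* Vertices of T' : option V, old vertex v is Some v, the new vertex y' is None. *)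
Section Expansion.
Variable R : realType.
Variable V : finType.

Definition exp_rel (e : rel V) (x y : V) : rel (option V) :=
  fun a b => match a, b with
  | Some u, Some v => e u v && ~~ (((u == x) && (v == y)) || ((u == y) && (v == x)))
  | Some u, None => (u == x) || (u == y)
  | None, Some v => (v == x) || (v == y)
  | None, None => false
  end.

(* lambda'(xy') = lambda(xy), lambda'(yy') = eps, other edges unchanged
   (values on non-edges are irrelevant) *)
Definition exp_len (lam : V -> V -> R) (x y : V) (eps : R) : option V -> option V -> R :=
  fun a b => match a, b with
  | Some u, Some v => lam u v
  | Some u, None | None, Some u =>
      if u == x then lam x y else if u == y then eps else 0
  | None, None => 0
  end.

Definition del_rel (e : rel V) (y : V) : rel V :=
  [rel a b | [&& e a b, a != y & b != y]].

Definition exp_U (e : rel V) (x y : V) (k : nat) (U : 'I_k -> {set V}) (i0 : 'I_k)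
    : 'I_k -> {set option V} :=
  fun i => if i == i0 then
             None |: [set Some v | v in [set v in U i0 | connect (del_rel e y) x v]]
           else [set Some v | v in U i].

Definition exp_S (k : nat) (S : 'I_k -> {set V}) : 'I_k -> {set option V} :=
  fun i => [set Some v | v in S i].

End Expansion.

From HB Require Import structures.
From mathcomp Require Import all_boot all_order all_algebra.
From mathcomp Require Import reals.
From mathcomp Require Import lra.
Import Order.TTheory GRing.Theory Num.Theory.
Local Open Scope ring_scope.

(* Let X be the component of T - y containing x, and Y the set of the remaining
   vertices.  Every path between X and Y uses the edge xy, so subdividing xy by y'
   keeps the distances inside X and inside Y, adds eps to those between X and Y, and
   puts y' at distance d(a,x) + lambda(xy) from a in X and d(a,y) + eps from a in Y.
   Since x lies only in U_1, the site s_1 is strictly nearer to x than any other site;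
   since y also lies in some U_m with m <> 1, s_1 and s_m are equally near to y, which
   forces s_1 into X and s_m into Y.  Hence, for z in X, every site in Y is strictly
   farther from z than s_1, and for z in Y every site in X is at least as far from z as
   s_m (strictly, unless it is s_1).  So adding eps to the distances from the sites on
   the other side of z changes the nearest sites of z only by dropping s_1 when z lies
   in Y, while s_1 is the unique nearest site of y': the new cells are exactly U_1' and
   the unchanged U_i. *)

Set Implicit Arguments.
Unset Strict Implicit.
Unset Printing Implicit Defensive.

Lemma last_rev_belast (T : Type) (u : T) (p : seq T) :
  last (last u p) (rev (belast u p)) = u.
Proof. by case: p => //= a p; rewrite rev_cons last_rcons. Qed.

Lemma foldr_min_le (R : realDomainType) (a : R) s z :
  z \in a :: s -> foldr Num.min a s <= z.
Proof.
elim: s => [|b s IH] /=; first by rewrite inE => /eqP ->.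
rewrite ge_min !inE => /or3P[/eqP za|/eqP ->|zs]; last by rewrite IH ?inE ?zs ?orbT.
- by apply/orP; right; apply: IH; rewrite za mem_head.
- by rewrite lexx.
Qed.

Lemma foldr_min_const (R : realDomainType) (m a : R) s :
  all (pred1 m) (a :: s) -> foldr Num.min a s = m.
Proof.
elim: s => [|b s IH] /=; first by rewrite andbT => /eqP.
by case/and3P=> am /eqP -> bs; rewrite IH ?minxx //= am.
Qed.

Lemma tree_sym (W : finType) (r : rel W) : is_tree r -> symmetric r.
Proof. by case. Qed.

Lemma tree_irr (W : finType) (r : rel W) : is_tree r -> irreflexive r.
Proof. by case. Qed.

Lemma forall_imset (I T : finType) (f : I -> T) (P : pred T) :
  [forall t in [set f i | i : I], P t] = [forall i, P (f i)].
Proof.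
apply/forall_inP/forallP => [P_im i|P_f _ /imsetP[i _ ->] //].
by apply: P_im; apply: imset_f.
Qed.

Lemma forall_le_unique (I : finType) (R : realDomainType) (f : I -> R) j0 i :
  (forall j, j != j0 -> f j0 < f j) -> [forall j, f i <= f j] = (i == j0).
Proof.
move=> f_min; apply/forallP/eqP => [i_min|-> j]; last first.
  by have [->|/f_min/ltW] := eqVneq j j0.
by apply/eqP; apply: contraTT (i_min j0) => /f_min; rewrite -ltNge.
Qed.

Lemma forall_le_penalty (I : finType) (R : realDomainType) (c : I -> R) (P : pred I)
    (eps : R) j0 i :
  0 < eps -> P j0 -> (forall j, ~~ P j -> c j0 <= c j) -> (~~ P i -> c j0 < c i) ->
  [forall j, c i <= c j] =
  [forall j, c i + (if P i then 0 else eps) <= c j + (if P j then 0 else eps)].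
Proof.
move=> eps_gt0 Pj0 off_le off_lt; apply/forallP/forallP => i_min j.
  have Pi : P i by apply: contraT => /off_lt; rewrite ltNge i_min.
  rewrite Pi addr0; apply: le_trans (i_min j) _; case: (P j); lra.
have Pi : P i.
  apply/negPn/negP => nPi; have := i_min j0; rewrite Pj0 (negPf nPi).
  have := off_le i nPi; lra.
have := i_min j; rewrite Pi addr0; have [Pj|nPj] := boolP (P j); first by rewrite addr0.
have := i_min j0; rewrite Pi Pj0; have := off_le j nPj; lra.
Qed.

Section Distances.
Variables (R : realType) (W : finType) (r : rel W) (l : W -> W -> R).
Hypothesis l_sym : forall a b, r a b -> l a b = l b a.
Hypothesis l_ge0 : forall a b, r a b -> 0 <= l a b.

Definition simple_path (u w : W) (p : seq W) : bool :=
  [&& path r u p, last u p == w & uniq (u :: p)].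

Lemma mem_simple_paths u w p : (p \in simple_paths r u w) = simple_path u w p.
Proof.
apply/flatten_mapP/idP => [[n _]|sp]; first by rewrite mem_filter => /andP[].
exists (size p).
  case/and3P: sp => _ _ /card_uniqP up.
  by rewrite mem_iota add0n /= -[(size p).+1]/(size (u :: p)) -up max_card.
rewrite mem_filter [X in X && _]sp; apply/mapP; exists (in_tuple p) => //.
by rewrite mem_enum.
Qed.

Lemma path_simple_path u p : path r u p ->
  exists2 q, simple_path u (last u p) q & {subset q <= p}.
Proof. by case/shortenP=> q rq uq sub_q; exists q; rewrite // /simple_path rq uq eqxx. Qed.

Lemma connect_simple_path u w : connect r u w -> exists p, simple_path u w p.
Proof. by case/connectP=> p /path_simple_path[q sq _] ->; exists q. Qed.

Lemma simple_path_connect u w p : simple_path u w p -> connect r u w.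
Proof. by case/and3P=> rp /eqP <- _; apply/connectP; exists p. Qed.

Lemma simple_path_cons u v w p :
  r u v -> u \notin v :: p -> simple_path v w p -> simple_path u w (v :: p).
Proof. by move=> ruv nup /and3P[rp lp up]; rewrite /simple_path /= ruv rp lp nup. Qed.

Lemma simple_path_cat u v w p q :
  simple_path u v p -> simple_path v w q -> ~~ has (mem (u :: p)) q ->
  simple_path u w (p ++ q).
Proof.
case/and3P=> rp /eqP lp up /and3P[rq /eqP lq uvq] pq.
rewrite /simple_path cat_path last_cat lp rp rq lq eqxx -cat_cons cat_uniq up pq.
by case/andP: uvq.
Qed.

Lemma simple_path_rev u w p : symmetric r ->
  simple_path u w p -> simple_path w u (rev (belast u p)).
Proof.
move=> rsym /and3P[rp /eqP lp up]; rewrite -lp /simple_path last_rev_belast eqxx.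
by rewrite rev_path (eq_path (e' := r)) // -rev_rcons -lastI rev_uniq rp up.
Qed.

Lemma walk_len_cat u p q :
  walk_len l u (p ++ q) = walk_len l u p + walk_len l (last u p) q.
Proof. by elim: p u => [|a p IH] u /=; rewrite ?add0r // IH addrA. Qed.

Lemma walk_len_rev u p :
  path r u p -> walk_len l (last u p) (rev (belast u p)) = walk_len l u p.
Proof.
elim: p u => [|c p IH] u //= /andP[ruc rp].
rewrite rev_cons -cats1 walk_len_cat last_rev_belast IH //= addr0 addrC.
by rewrite (l_sym ruc).
Qed.

Lemma walk_len_ge0 u p : path r u p -> 0 <= walk_len l u p.
Proof.
by elim: p u => [|a p IH] u //= /andP[rua /IH]; apply: addr_ge0; apply: l_ge0.
Qed.

Lemma simple_path_shorten u p : path r u p ->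
  exists2 q, simple_path u (last u p) q & walk_len l u q <= walk_len l u p.
Proof.
elim: p u => [|a p IH] u /=.
  by move=> _; exists [::]; rewrite ?lexx // /simple_path /= eqxx.
case/andP=> rua /IH[q /and3P[rq /eqP lq uq] le_qp].
have [eq_ua|nua] := eqVneq u a.
  subst a; exists q; first by rewrite /simple_path rq lq eqxx.
  by rewrite -[leLHS]add0r lerD ?l_ge0.
have [uq_in|nuq] := boolP (u \in q); last first.
  exists (a :: q); last by rewrite /= lerD2l.
  by rewrite /simple_path /= rua rq lq eqxx /= inE negb_or nua nuq.
have {le_qp} : walk_len l a q <= l u a + walk_len l a p.
  by rewrite -[leLHS]add0r lerD ?l_ge0.
case/splitPr: uq_in rq lq uq => q1 q2.
rewrite cat_path last_cat -cat_cons cat_uniq /=.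
move=> /and3P[rq1 rq12 rq2] lq2 /and3P[_ _ uq2] le_q.
exists q2; first by rewrite /simple_path rq2 lq2 eqxx; apply: uq2.
apply: le_trans le_q; rewrite walk_len_cat /= addrA lerDr.
by rewrite addr_ge0 ?walk_len_ge0 ?l_ge0.
Qed.

Lemma dist_le_simple u w p : simple_path u w p -> dist r l u w <= walk_len l u p.
Proof.
rewrite -mem_simple_paths /dist => /(map_f (walk_len l u)).
by case: [seq _ | _ <- _] => // a s; apply: foldr_min_le.
Qed.

Lemma dist_le_walk u p : path r u p -> dist r l u (last u p) <= walk_len l u p.
Proof. by case/simple_path_shorten=> q /dist_le_simple; apply: le_trans. Qed.

Lemma dist_const u w p m : simple_path u w p ->
  (forall q, simple_path u w q -> walk_len l u q = m) -> dist r l u w = m.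
Proof.
rewrite -mem_simple_paths /dist => /(map_f (walk_len l u)) + wm.
have : all (pred1 m) [seq walk_len l u q | q <- simple_paths r u w].
  by apply/allP => _ /mapP[q + ->]; rewrite mem_simple_paths => /wm /eqP.
by case: [seq _ | _ <- _] => // a s /foldr_min_const.
Qed.

Hypothesis tree : is_tree r.

Lemma tree_simple_path u w : exists p, simple_path u w p.
Proof. by apply: connect_simple_path; case: tree. Qed.

Lemma tree_simple_path_uniq u w p q :
  simple_path u w p -> simple_path u w q -> p = q.
Proof.
have [rsym _ _ acyclic] := tree.
elim: p u q => [|a p IH] u [|b q] //.
- move=> /and3P[_ /eqP/= uw _] /and3P[_ /eqP lq /andP[/negP[]]].
  by rewrite uw -lq /= mem_last.
- move=> /and3P[_ /eqP lp /andP[nup _]] /and3P[_ /eqP/= uw _].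
  by case/negP: nup; rewrite uw -lp /= mem_last.
rewrite /simple_path /= => /and3P[/andP[rua rp] lp /andP[nup up]].
move=> /and3P[/andP[rub rq] lq /andP[nuq uq]].
have [eq_ab|nab] := eqVneq a b.
  by subst b; congr cons; apply: (IH a); rewrite /simple_path ?rp ?rq ?lp ?lq.
(* Otherwise the walk from a to w followed by the reversed path from w to b shortens
   to a path from a to b avoiding u, which closes a cycle through u. *)
have pbw : simple_path b w q by apply/and3P.
have /and3P[rq' /eqP lq' _] := simple_path_rev rsym pbw.
have /path_simple_path[t] : path r a (p ++ rev (belast b q)).
  by rewrite cat_path rp (eqP lp) rq'.
rewrite last_cat (eqP lp) lq' => /and3P[rt /eqP lt ut] sub_t.
have t_gt0 : (0 < size t)%N.
  by case: t lt {rt ut sub_t} => //= ab; rewrite ab eqxx in nab.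
have nut : u \notin a :: t.
  rewrite inE negb_or; apply/andP; split.
    by apply: contraNneq nup => ->; rewrite mem_head.
  apply/negP => /sub_t; rewrite mem_cat mem_rev => /orP[ut'|/mem_belast ut'].
    by rewrite inE ut' orbT in nup.
  by rewrite ut' in nuq.
have c_uniq : uniq (u :: a :: t) by rewrite cons_uniq nut ut.
case/negP: (acyclic (u :: a :: t) t_gt0 c_uniq).
by rewrite /= rua rcons_path rt lt rsym rub.
Qed.

Lemma tree_edge_simple_path u v p : r u v -> simple_path u v p -> p = [:: v].
Proof.
move=> euv puv; apply: (tree_simple_path_uniq puv).
rewrite /simple_path /= euv eqxx inE /= andbT; apply: contraTneq euv => ->.
by rewrite tree_irr.
Qed.

Lemma dist_treeE u w p : simple_path u w p -> dist r l u w = walk_len l u p.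
Proof.
by move=> puw; apply: (dist_const puw) => q quw; rewrite (tree_simple_path_uniq quw puw).
Qed.

Lemma dist_xx u : dist r l u u = 0.
Proof. by rewrite (@dist_treeE u u [::]) // /simple_path eqxx. Qed.

Lemma dist_triangle a b c : dist r l a c <= dist r l a b + dist r l b c.
Proof.
have [p pab] := tree_simple_path a b; have [q qbc] := tree_simple_path b c.
rewrite (dist_treeE pab) (dist_treeE qbc).
case/and3P: pab qbc => rp /eqP lp _ /and3P[rq /eqP lq _].
have := @dist_le_walk a (p ++ q); rewrite last_cat lp lq walk_len_cat lp; apply.
by rewrite cat_path rp lp rq.
Qed.

Lemma dist_sym u w : dist r l u w = dist r l w u.
Proof.
have [p puw] := tree_simple_path u w; have rsym := tree_sym tree.
rewrite (dist_treeE puw) (dist_treeE (simple_path_rev rsym puw)).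
by case/and3P: puw => rp /eqP <- _; rewrite walk_len_rev.
Qed.

End Distances.

Arguments dist_treeE {R W r l} tree {u w p}.
Arguments dist_xx {R W r l} tree u.

Lemma map_Some_pmap (T : eqType) (s : seq (option T)) :
  None \notin s -> map Some (pmap id s) = s.
Proof. by elim: s => [|[a|] s IH] //=; rewrite in_cons => /norP[_ /IH ->]. Qed.

Lemma sub_simple_path (W : finType) (r r' : rel W) u w p :
  subrel r r' -> simple_path r u w p -> simple_path r' u w p.
Proof. by move=> sub /and3P[rp lp up]; rewrite /simple_path (sub_path sub rp) lp up. Qed.

Section Expansion.
Variables (R : realType) (V : finType) (e : rel V) (lam : V -> V -> R).
Variables (x y : V) (eps : R).
Hypotheses (tree : is_tree e) (lam_pos : edge_lengths e lam).
Hypothesis exy : e x y.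

Local Notation e' := (exp_rel e x y).
Local Notation lam' := (exp_len lam x y eps).

Definition x_side (v : V) : bool := connect (del_rel e y) x v.

Lemma x_neq_y : x != y.
Proof. by apply: contraTneq exy => ->; rewrite tree_irr. Qed.

Lemma x_side_x : x_side x. Proof. exact: connect0. Qed.

Lemma del_rel_sym : symmetric (del_rel e y).
Proof.
by move=> a b; apply/and3P/and3P=> -[eab ay by']; split; rewrite // (tree_sym tree).
Qed.

Lemma del_path u p : path e u p -> y \notin u :: p -> path (del_rel e y) u p.
Proof.
elim: p u => [|c p IH] u //= /andP[euc ep]; rewrite !inE !negb_or => /and3P[uy cy yp].
by rewrite /del_rel /= euc (eq_sym u) uy (eq_sym c) cy IH // inE negb_or cy.
Qed.

Lemma x_side_y : x_side y = false.
Proof.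
apply/negP => /connectP[p rp ly].
case/lastP: p rp ly => [_ yx|p c]; first by move: x_neq_y; rewrite yx eqxx.
by rewrite rcons_path last_rcons => /andP[_ /and3P[_ _ cy]] yc; rewrite yc eqxx in cy.
Qed.

Lemma x_side_path a b : x_side a -> x_side b ->
  exists2 p, simple_path e a b p & {in a :: p, forall v, x_side v}.
Proof.
move=> xa xb; have /connect_simple_path[p pab] : connect (del_rel e y) a b.
  by apply: connect_trans xb; rewrite (sym_connect_sym del_rel_sym).
exists p; first by apply: sub_simple_path pab => u v /and3P[].
by case/and3P: pab => dp _ _ v /(path_connect dp); apply: connect_trans.
Qed.

Lemma y_side_path b : ~~ x_side b ->
  exists2 p, simple_path e y b p & {in y :: p, forall v, ~~ x_side v}.
Proof.
move=> nxb; have [[|c p] pyb] := tree_simple_path tree y b.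
  by exists [::] => // v; rewrite inE => /eqP ->; by rewrite x_side_y.
exists (c :: p) => // v; rewrite in_cons => /predU1P[->|vp]; first by rewrite x_side_y.
case/and3P: pyb => /= /andP[_ ecp] /eqP lp /andP[nyp _].
have dcp := del_path ecp nyp.
apply: contra nxb => xv; rewrite /x_side -lp.
apply: connect_trans xv _; apply: connect_trans (path_connect dcp (mem_last c p)).
by rewrite (sym_connect_sym del_rel_sym) (path_connect dcp vp).
Qed.

Lemma not_x_side_path a b : ~~ x_side a -> ~~ x_side b ->
  exists2 p, simple_path e a b p & {in a :: p, forall v, ~~ x_side v}.
Proof.
move=> nxa nxb; have [p1 pya Y1] := y_side_path nxa; have [p2 pyb Y2] := y_side_path nxb.
have /and3P[ep1 /eqP lp1 _] := simple_path_rev (tree_sym tree) pya.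
case/and3P: pyb => ep2 /eqP lp2 _.
have /path_simple_path[t] : path e a (rev (belast y p1) ++ p2).
  by rewrite cat_path ep1 lp1.
rewrite last_cat lp1 lp2 => pab sub_t; exists t => // v.
rewrite in_cons => /predU1P[->//|/sub_t]; rewrite mem_cat mem_rev.
case/orP=> [/mem_belast/Y1 //|vp2]; apply: Y2; exact: mem_behead.
Qed.

Lemma side_path a b : x_side a = x_side b ->
  exists2 p, simple_path e a b p & {in a :: p, forall v, x_side v = x_side a}.
Proof.
case xa: (x_side a) => xb.
  by have [p pab X] := x_side_path xa (esym xb); exists p => // v /X.
have [p pab Y] := not_x_side_path (negbT xa) (negbT (esym xb)).
by exists p => // v /Y /negbTE.
Qed.

Lemma sides_disjoint (s1 s2 : seq V) b1 b2 : b1 != b2 ->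
  {in s1, forall v, x_side v = b1} -> {in s2, forall v, x_side v = b2} ->
  ~~ has (mem s1) s2.
Proof.
by move=> b12 X1 X2; apply/hasPn => v /X2 vb2; apply: contra b12 => /X1 <-; apply/eqP.
Qed.

Lemma exp_rel_Some u v : e u v -> x_side u = x_side v -> e' (Some u) (Some v).
Proof.
move=> euv same; rewrite /= euv; apply/negP.
by case/orP=> /andP[/eqP ux /eqP vy]; move: same; rewrite ux vy x_side_x x_side_y.
Qed.

Lemma lift_path u p : path e u p -> {in u :: p, forall v, x_side v = x_side u} ->
  path e' (Some u) (map Some p).
Proof.
elim: p u => [|c p IH] u // /andP[euc ecp] side.
have cu : x_side c = x_side u by apply: side; rewrite !inE eqxx orbT.
apply/andP; split; first exact: exp_rel_Some euc (esym cu).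
by apply: IH => // v vp; rewrite cu side // in_cons vp orbT.
Qed.

Lemma unlift_path u p : path e' (Some u) (map Some p) -> path e u p.
Proof. by elim: p u => [|c p IH] u //= /andP[/andP[-> _] /IH]. Qed.

Lemma walk_len_lift u p : walk_len lam' (Some u) (map Some p) = walk_len lam u p.
Proof. by elim: p u => [|c p IH] u //=; rewrite IH. Qed.

Lemma lift_simple_path u w p : simple_path e u w p ->
  {in u :: p, forall v, x_side v = x_side u} ->
  simple_path e' (Some u) (Some w) (map Some p).
Proof.
case/and3P=> ep /eqP lp up side.
by rewrite /simple_path lift_path // last_map lp eqxx -map_cons (map_inj_uniq Some_inj).
Qed.

Lemma cross_simple_paths a b p1 p2 : x_side a ->
  simple_path e a x p1 -> {in a :: p1, forall v, x_side v = x_side a} ->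
  simple_path e y b p2 -> {in y :: p2, forall v, x_side v = x_side y} ->
  simple_path e a b (p1 ++ y :: p2) /\
  simple_path e' (Some a) (Some b) (map Some p1 ++ None :: Some y :: map Some p2).
Proof.
move=> xa pax X1 pyb Y2; have xay : x_side a != x_side y by rewrite xa x_side_y.
have nxY : x \notin y :: p2.
  by apply/negP => /Y2; rewrite x_side_x x_side_y.
split.
  exact: simple_path_cat pax (simple_path_cons exy nxY pyb) (sides_disjoint xay X1 Y2).
apply: simple_path_cat (lift_simple_path pax X1) _ _.
  apply: simple_path_cons; first by rewrite /= eqxx.
    by rewrite in_cons /= -map_cons (mem_map Some_inj).
  apply: simple_path_cons (lift_simple_path pyb Y2); first by rewrite /= eqxx orbT.
  by rewrite -map_cons; apply/mapP => -[].
rewrite -!map_cons; apply/hasPn => -[v|]; last by move=> _; apply/mapP => -[].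
rewrite in_cons (mem_map Some_inj) => vY; apply/negP => /mapP[w wa [vw]].
by move/hasPn: (sides_disjoint xay X1 Y2) => /(_ v vY)/negP[]; rewrite vw.
Qed.

Lemma exp_rel_sym : symmetric e'.
Proof.
case=> [u|] [v|] //=; rewrite (tree_sym tree).
by case: (u == x); case: (v == y); case: (u == y); case: (v == x).
Qed.

Lemma exp_connect_x A : connect e' (Some x) A.
Proof.
case: A => [b|]; last by apply: connect1; rewrite /= eqxx.
have [xb|nxb] := boolP (x_side b).
  have [|p pxb X] := @side_path x b; first by rewrite x_side_x xb.
  exact: simple_path_connect (lift_simple_path pxb X).
have [|p pyb Y] := @side_path y b; first by rewrite x_side_y (negPf nxb).
have pxx : simple_path e x x [::] by rewrite /simple_path eqxx.
have X : {in [:: x], forall v, x_side v = x_side x} by move=> v; rewrite inE => /eqP ->.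
exact: simple_path_connect (proj2 (cross_simple_paths x_side_x pxx X pyb Y)).
Qed.

Lemma exp_cycle_Some c : (3 <= size c)%N -> uniq c -> ~~ cycle e' (map Some c).
Proof.
have [_ _ _ acyclic] := tree; case: c => [|a c] // c_size c_uniq.
apply: contra (acyclic _ c_size c_uniq) => /=.
by rewrite -map_rcons => /unlift_path.
Qed.

Lemma exp_cycle_None a c : (0 < size c)%N -> uniq (a :: c) ->
  ~~ cycle e' (None :: Some a :: map Some c).
Proof.
(* The neighbours of y' are x and y only, so the rest of the cycle is a path of T
   joining x and y and avoiding the edge xy. *)
move=> c_gt0 ac_uniq; have /andP[nac _] := ac_uniq.
rewrite /cycle rcons_path /= last_map.
apply/negP => /andP[/andP[Na /[dup] ec' /unlift_path ec] zN].
have naz : a != last a c.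
  apply: contraNneq nac => ->.
  by case: c c_gt0 {ac_uniq ec' ec zN} => //= b c _; apply: mem_last.
set z := last a c in zN naz.
have axz : (a == x) && (z == y) || (a == y) && (z == x).
  by move: Na zN naz => /orP[]/eqP-> /orP[]/eqP->; rewrite ?eqxx ?orbT.
have eaz : e a z by case/orP: axz => /andP[/eqP-> /eqP->] //; rewrite (tree_sym tree).
have /(tree_edge_simple_path tree eaz) cE : simple_path e a z c.
  by rewrite /simple_path ec eqxx ac_uniq.
by move: ec'; rewrite cE /= axz andbF.
Qed.

Lemma exp_tree : is_tree e'.
Proof.
split; first exact: exp_rel_sym.
- by case=> [u|] //=; rewrite tree_irr.
- move=> A B; apply: connect_trans (exp_connect_x B).
  by rewrite (sym_connect_sym exp_rel_sym) exp_connect_x.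
move=> c c_size c_uniq; have [/rot_to[i c' c_rot]|Nc] := boolP (None \in c).
  move: c_size c_uniq; rewrite -(rot_cycle i) -(size_rot i) -(rot_uniq i) c_rot.
  move=> c_size /andP[Nc' c'_uniq]; rewrite -(map_Some_pmap Nc').
  have : (2 <= size (pmap id c'))%N by rewrite -(size_map Some) map_Some_pmap.
  have : uniq (pmap id c') by rewrite -(map_inj_uniq Some_inj) map_Some_pmap.
  by case: (pmap id c') => [|a s] // as_uniq s_gt0; apply: exp_cycle_None.
rewrite -(map_Some_pmap Nc); apply: exp_cycle_Some.
  by rewrite -(size_map Some) map_Some_pmap.
by rewrite -(map_inj_uniq Some_inj) map_Some_pmap.
Qed.

Local Notation d := (dist e lam).
Local Notation d' := (dist e' lam').

Lemma lam_sym a b : e a b -> lam a b = lam b a.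
Proof. by case/lam_pos. Qed.

Lemma exp_len_sym A B : e' A B -> lam' A B = lam' B A.
Proof. by case: A B => [u|] [v|] //= /andP[/lam_sym]. Qed.

Lemma exp_dist_same a b : x_side a = x_side b -> d' (Some a) (Some b) = d a b.
Proof.
case/side_path=> p pab side.
rewrite (dist_treeE exp_tree (lift_simple_path pab side)) walk_len_lift.
by rewrite (dist_treeE tree pab).
Qed.

Lemma dist_cross a b : x_side a -> ~~ x_side b ->
  d a b = d a x + lam x y + d y b /\ d' (Some a) (Some b) = d a b + eps.
Proof.
move=> xa nxb; have [|p1 pax X1] := @side_path a x; first by rewrite xa x_side_x.
have [|p2 pyb Y2] := @side_path y b; first by rewrite x_side_y (negPf nxb).
have [pab pab'] := cross_simple_paths xa pax X1 pyb Y2.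
case/and3P: (pax) => _ /eqP lp1 _.
rewrite (dist_treeE exp_tree pab') (dist_treeE tree pab) (dist_treeE tree pax).
rewrite (dist_treeE tree pyb) !walk_len_cat last_map lp1 /= !walk_len_lift.
rewrite eqxx (eq_sym y) (negPf x_neq_y) eqxx.
by split; lra.
Qed.

Lemma dist_cross_sym a b : ~~ x_side a -> x_side b ->
  d a b = d a y + lam x y + d x b /\ d' (Some a) (Some b) = d a b + eps.
Proof.
move=> nxa xb; have [E E'] := dist_cross xb nxa.
have ds := dist_sym lam_sym tree; have ds' := dist_sym exp_len_sym exp_tree.
by rewrite ds' E' (ds a b) E (ds b x) (ds y a); split; lra.
Qed.

Lemma exp_dist_None a :
  d' (Some a) None = if x_side a then d a x + lam x y else d a y + eps.
Proof.
case: ifP => xa.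
  have [|p pax X] := @side_path a x; first by rewrite xa x_side_x.
  have pxN : simple_path e' (Some x) None [:: None].
    by apply: simple_path_cons; rewrite /= ?eqxx // /simple_path.
  have /(dist_treeE exp_tree) -> : simple_path e' (Some a) None (map Some p ++ [:: None]).
    apply: simple_path_cat (lift_simple_path pax X) pxN _.
    by rewrite /= orbF -map_cons; apply/mapP => -[].
  case/and3P: (pax) => _ /eqP lp _.
  by rewrite walk_len_cat last_map lp walk_len_lift /= eqxx addr0 (dist_treeE tree pax).
have [|p pya Y] := @side_path y a; first by rewrite x_side_y xa.
have /(dist_treeE exp_tree) : simple_path e' None (Some a) (Some y :: map Some p).
  apply: simple_path_cons (lift_simple_path pya Y); first by rewrite /= eqxx orbT.
  by rewrite -map_cons; apply/mapP => -[].
rewrite (dist_sym exp_len_sym exp_tree) (dist_sym lam_sym tree a) => ->.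
by rewrite /= walk_len_lift (eq_sym y) (negPf x_neq_y) eqxx (dist_treeE tree pya) addrC.
Qed.

Lemma exp_dist_Some a b :
  d' (Some a) (Some b) = d a b + (if x_side a == x_side b then 0 else eps).
Proof.
case xa: (x_side a); case xb: (x_side b) => /=.
- by rewrite exp_dist_same ?xa ?xb // addr0.
- by case: (dist_cross xa (negbT xb)).
- by case: (dist_cross_sym (negbT xa) xb).
- by rewrite exp_dist_same ?xa ?xb // addr0.
Qed.

End Expansion.

(* Here d and d' stand for the distances in T and in the expanded tree, X for the
   component of T - y containing x, and la for lambda(xy); the hypotheses on them are
   the facts proved in section Expansion. *)
Section CellsAfterExpansion.
Variables (R : realType) (V : finType) (d : V -> V -> R).
Variables (d' : option V -> option V -> R) (X : pred V) (x y : V) (la eps : R).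
Hypotheses (la_gt0 : 0 < la) (eps_gt0 : 0 < eps) (Xx : X x) (nXy : ~~ X y).
Hypothesis d_xx : forall a, d a a = 0.
Hypothesis d_triangle : forall a b c, d a c <= d a b + d b c.
Hypothesis d_cross : forall a b, X a -> ~~ X b -> d a b = d a x + la + d y b.
Hypothesis d_cross_sym : forall a b, ~~ X a -> X b -> d a b = d a y + la + d x b.
Hypothesis d'_Some :
  forall a b, d' (Some a) (Some b) = d a b + (if X a == X b then 0 else eps).
Hypothesis d'_None :
  forall a, d' (Some a) None = if X a then d a x + la else d a y + eps.

Variables (k : nat) (U : 'I_k -> {set V}) (s : 'I_k -> V) (i1 m : 'I_k).
Hypothesis U_cell : forall i z, (z \in U i) = [forall j, d (s i) z <= d (s j) z].
Hypothesis x_in_U : forall j, (x \in U j) = (j == i1).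
Hypotheses (y_in_U1 : y \in U i1) (m_neq_i1 : m != i1) (y_in_Um : y \in U m).

Lemma le_dist_site1_x j : d (s i1) x <= d (s j) x.
Proof. by move: (x_in_U i1); rewrite eqxx U_cell => /forallP. Qed.

Lemma lt_dist_site1_x j : j != i1 -> d (s i1) x < d (s j) x.
Proof.
move=> ji1; have := x_in_U j; rewrite (negPf ji1) U_cell => /negbT.
rewrite negb_forall => /existsP[j']; rewrite -ltNge.
exact: le_lt_trans (le_dist_site1_x j').
Qed.

Lemma le_dist_sitem_y j : d (s m) y <= d (s j) y.
Proof. by move: y_in_Um; rewrite U_cell => /forallP. Qed.

Lemma dist_site1_y_sitem : d (s i1) y = d (s m) y.
Proof.
apply/eqP; rewrite eq_le le_dist_sitem_y andbT.
by move: y_in_U1; rewrite U_cell => /forallP.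
Qed.

Lemma X_site1 : X (s i1).
Proof.
apply/negPn/negP => nXs1; have := lt_dist_site1_x m_neq_i1.
have := d_triangle (s m) y x; rewrite (d_cross_sym nXs1 Xx) (d_cross_sym nXy Xx) !d_xx.
have := le_dist_sitem_y i1; lra.
Qed.

Lemma notX_sitem : ~~ X (s m).
Proof.
apply/negP => Xsm; have := lt_dist_site1_x m_neq_i1; have := dist_site1_y_sitem.
by rewrite (d_cross X_site1 nXy) (d_cross Xsm nXy) d_xx; lra.
Qed.

Lemma dist_site1_yx : d (s i1) y = d (s i1) x + la.
Proof. by rewrite (d_cross X_site1 nXy) d_xx addr0. Qed.

Lemma lt_dist_site1_X z j : X z -> ~~ X (s j) -> d (s i1) z < d (s j) z.
Proof.
move=> Xz nXsj; rewrite (d_cross_sym nXsj Xz).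
have := le_dist_sitem_y j; have := dist_site1_y_sitem; have := d_triangle (s i1) x z.
by rewrite dist_site1_yx; have := la_gt0; lra.
Qed.

Lemma le_dist_sitem_notX z j : ~~ X z -> X (s j) -> d (s m) z <= d (s j) z.
Proof.
move=> nXz Xsj; rewrite (d_cross Xsj nXz).
have := le_dist_site1_x j; have := dist_site1_y_sitem; have := d_triangle (s m) y z.
by rewrite dist_site1_yx; lra.
Qed.

Lemma lt_dist_sitem_notX z j : j != i1 -> ~~ X z -> X (s j) -> d (s m) z < d (s j) z.
Proof.
move=> ji1 nXz Xsj; rewrite (d_cross Xsj nXz).
have := lt_dist_site1_x ji1; have := dist_site1_y_sitem; have := d_triangle (s m) y z.
by rewrite dist_site1_yx; lra.
Qed.

Lemma None_cellE i :
  [forall j, d' (Some (s i)) None <= d' (Some (s j)) None] = (i == i1).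
Proof.
apply: (forall_le_unique (f := fun j => d' (Some (s j)) None)) => j ji1.
rewrite !d'_None X_site1 /=; have := lt_dist_site1_x ji1; case: ifP => Xsj; first lra.
have := le_dist_sitem_y j; have := dist_site1_y_sitem; rewrite dist_site1_yx.
by have := eps_gt0; lra.
Qed.

Lemma X_cellE i z : X z ->
  (z \in U i) = [forall j, d' (Some (s i)) (Some z) <= d' (Some (s j)) (Some z)].
Proof.
move=> Xz; have off_lt j : ~~ (X (s j) == X z) -> d (s i1) z < d (s j) z.
  by rewrite Xz eqb_id; apply: lt_dist_site1_X.
have Ps1 : X (s i1) == X z by rewrite X_site1 Xz.
have off_le j : ~~ (X (s j) == X z) -> d (s i1) z <= d (s j) z by move/off_lt/ltW.
move: (forall_le_penalty (c := fun j => d (s j) z) (P := fun j => X (s j) == X z)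
  eps_gt0 Ps1 off_le (off_lt i)) => /=.
by rewrite U_cell => ->; apply: eq_forallb => j; rewrite !d'_Some.
Qed.

Lemma notX_cellE i z : i != i1 -> ~~ X z ->
  (z \in U i) = [forall j, d' (Some (s i)) (Some z) <= d' (Some (s j)) (Some z)].
Proof.
move=> ii1 nXz; have Psm : X (s m) == X z by rewrite (negPf notX_sitem) (negPf nXz).
have off_le j : ~~ (X (s j) == X z) -> d (s m) z <= d (s j) z.
  by rewrite (negPf nXz) eqbF_neg negbK; apply: le_dist_sitem_notX.
have off_lt : ~~ (X (s i) == X z) -> d (s m) z < d (s i) z.
  by rewrite (negPf nXz) eqbF_neg negbK; apply: lt_dist_sitem_notX.
move: (forall_le_penalty (c := fun j => d (s j) z) (P := fun j => X (s j) == X z)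
  eps_gt0 Psm off_le off_lt) => /=.
by rewrite U_cell => ->; apply: eq_forallb => j; rewrite !d'_Some.
Qed.

Lemma notX_notin_cell1 z : ~~ X z ->
  ~~ [forall j, d' (Some (s i1)) (Some z) <= d' (Some (s j)) (Some z)].
Proof.
move=> nXz; rewrite negb_forall; apply/existsP; exists m.
rewrite -ltNge !d'_Some X_site1 (negPf nXz) (negPf notX_sitem) /=.
by have := le_dist_sitem_notX nXz X_site1; have := eps_gt0; lra.
Qed.

Lemma expanded_cellE i A :
  (A \in if i == i1 then None |: [set Some v | v in [set v in U i1 | X v]]
         else [set Some v | v in U i])
  = [forall j, d' (Some (s i)) A <= d' (Some (s j)) A].
Proof.
case: A => [z|]; last first.
  rewrite None_cellE; have [_|_] := eqVneq i i1; first exact: setU11.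
  by apply/imsetP => -[].
have memS (T : {set V}) : (Some z \in [set Some v | v in T]) = (z \in T).
  by apply: mem_imset; apply: Some_inj.
have [Xz|nXz] := boolP (X z).
  rewrite -X_cellE //; have [->|ii1] := eqVneq i i1; last by rewrite memS.
  by rewrite in_setU1 memS inE Xz andbT.
have [->|ii1] := eqVneq i i1; last by rewrite memS notX_cellE.
by rewrite in_setU1 memS inE (negPf nXz) andbF; apply/esym/negbTE/notX_notin_cell1.
Qed.
End CellsAfterExpansion.

Lemma mem_Wset (V : finType) k (U : 'I_k -> {set V}) i v :
  v \in Wset U i -> forall j, (v \in U j) = (j == i).
Proof.
rewrite inE => /andP[nvU vUi] j; have [->//|ji] := eqVneq j i.
by apply: contraNF nvU => vUj; apply/bigcupP; exists j.
Qed.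

Lemma notin_Wset (V : finType) k (U : 'I_k -> {set V}) i v :
  v \in U i :\: Wset U i -> exists2 j, j != i & v \in U j.
Proof.
rewrite !inE negb_and negbK => /andP[/orP[/bigcupP[j ji vUj]|nvU] vU]; first by exists j.
by rewrite vU in nvU.
Qed.

Theorem lemma16 (R : realType) (V : finType) (e : rel V) (lam : V -> V -> R)
    (k : nat) (U S : 'I_k -> {set V}) (i1 : 'I_k) (x y : V) (eps : R)
    (s : 'I_k -> V) :
  is_tree e ->
  edge_lengths e lam ->
  covers U ->
  (forall i : 'I_k, S i \subset Wset U i) ->
  in_E e U i1 x y ->
  0 < eps ->
  is_solution e lam U S s ->
  is_solution (exp_rel e x y) (exp_len lam x y eps) (exp_U e x y U i1) (exp_S S)
    (fun i => Some (s i)).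
Proof.
move=> tree lam_pos _ _ /and3P[exy xW yU] eps_gt0 sol.
have U_cell i z : (z \in U i) = [forall j, dist e lam (s i) z <= dist e lam (s j) z].
  by rewrite (proj2 (sol i)) inE forall_imset.
have [m m_i1 y_Um] := notin_Wset yU.
have y_U1 : y \in U i1 by case/setDP: yU.
have lam_ge0 a b : e a b -> 0 <= lam a b by case/lam_pos => /ltW.
move=> i; split.
  by rewrite mem_imset; [exact: (proj1 (sol i)) | exact: Some_inj].
apply/setP => A; rewrite inE forall_imset.
apply: (expanded_cellE (proj1 (lam_pos _ _ exy)) eps_gt0 (x_side_x e x y)
  (negbT (x_side_y tree exy)) (dist_xx tree) (dist_triangle lam_ge0 tree) _ _
  (exp_dist_Some _ tree lam_pos exy) (exp_dist_None _ tree lam_pos exy)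
  U_cell (mem_Wset xW) y_U1 m_i1 y_Um).
- by move=> a b xa nxb; case: (dist_cross lam eps tree exy xa nxb).
- by move=> a b nxa xb; case: (dist_cross_sym eps tree lam_pos exy nxa xb).
Qed.
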